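(* Let $d\ge2$ and $n\ge1$. Then $$\dim_{\mathbb C}\big(A_{d,n}/R'(1)\big)=(2^{n-1}-1)d^2-(2^{n-1}-2)d,$$ and the images in $A_{d,n}/R'(1)$ of the monomials in $$\mathcal{B}_{d,n}(1)=\Big\{x_i^ax_{i+1}^b\prod_{j=i+2}^n x_j^{\epsilon_j}\;\Big|\;1\le i<n,\ 1\le a<d,\ 0\le b<d,\ \epsilon_j\in\{0,1\}\Big\}\cup\{x_n^b\mid 0\le b<d\}$$ form a basis of $A_{d,n}/R'(1)$. (For $d=2$, $\mathcal{B}_{2,n}(1)$ is the set of all monomials $x_1^{r_1}\cdots x_n^{r_n}$, $r_j\in\{0,1\}$; for $d>2$ it is the set of monomials $x_1^{r_1}\cdots x_n^{r_n}$, $r_j\in\{0,\dots,d-1\}$, not divisible by $x_ix_k^2$ for any $i<k$ with $k-i\ge2$.)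
   Context: $A_{d,n}$ is the complex group algebra of $(\mathbb Z/d\mathbb Z)^n$ with commuting generators $x_1,\dots,x_n$ satisfying $x_j^d=1$; it has basis the monomials $x_1^{r_1}\cdots x_n^{r_n}$, $r_j\in\{0,\dots,d-1\}$. A monomial $x_1^{a_1}\cdots x_n^{a_n}$ divides $x_1^{b_1}\cdots x_n^{b_n}$ (both with exponents in $\{0,\dots,d-1\}$) if $a_i\le b_i$ for all $i$. $R'(1)$ is the ideal of $A_{d,n}$ generated by the elements $(x_i-x_j)(x_i-x_k)(x_j-x_k)$ for $1\le i<j<k\le n$. *)

From HB Require Import structures.
From mathcomp Require Import all_boot all_order all_algebra all_field.
Set Implicit Arguments. Unset Strict Implicit. Unset Printing Implicit Defensive.
Import GRing.Theory Num.Theory.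
Local Open Scope ring_scope.

(* Exponent vectors (r_1,...,r_n) with r_j in {0,...,d-1}: the monomials
   x_1^{r_1}...x_n^{r_n}, i.e. the group elements of (Z/dZ)^n. *)
Definition expo (d n : nat) := {ffun 'I_n -> 'I_d}.

(* The complex group algebra A_{d,n} = C[(Z/dZ)^n], realised as the
   C-vector space of functions (Z/dZ)^n -> C (coefficients on the monomial
   basis); complex numbers are MathComp's algC. *)
Definition A (d n : nat) := {ffun expo d n -> algC^o}.

(* product of A_{d,n}: convolution, using x_j^d = 1 (exponents added mod d) *)
Definition amul (d n : nat) (f g : A d n) : A d n :=
  [ffun m : expo d n => \sum_(m1 : expo d n) \sum_(m2 : expo d n
     | [forall j, ((m1 j + m2 j) %% d)%N == (m j : nat)]) f m1 * g m2].

Definition mono (d n : nat) (r : expo d n) : A d n :=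
  [ffun m : expo d n => (m == r)%:R].

Definition xvar (d n : nat) (i : 'I_n) : A d n :=
  [ffun m : expo d n =>
     ((m i == 1%N :> nat) && [forall j, (j != i) ==> (m j == 0%N :> nat)])%:R].

Definition gen3 (d n : nat) (i j k : 'I_n) : A d n :=
  amul (amul (xvar d i - xvar d j) (xvar d i - xvar d k)) (xvar d j - xvar d k).

(* In the commutative
   algebra A_{d,n} with monomial basis, the ideal generated by a set S is the
   C-linear span of the products (monomial) * s, s in S. *)
Definition Rp1 (d n : nat) : {vspace A d n} :=
  <<[seq amul (mono r) (gen3 d t.1.1 t.1.2 t.2)
     | r <- enum (expo d n),
       t <- enum [pred t : 'I_n * 'I_n * 'I_n | (t.1.1 < t.1.2 < t.2)%N]]>>%VS.

(* membership of x^r in B_{d,n}(1) (indices 0-based: x_1..x_n are 0..n-1) *)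
Definition inB (d n : nat) (r : expo d n) : bool :=
  [exists i : 'I_n, [&& (i.+1 < n)%N, (0 < r i)%N,
       [forall j : 'I_n, (j < i)%N ==> (r j == 0%N :> nat)] &
       [forall j : 'I_n, (i.+1 < j)%N ==> (r j <= 1)%N]]]
  || [forall j : 'I_n, (j.+1 < n)%N ==> (r j == 0%N :> nat)].

Definition Bfam (d n : nat) : seq (A d n) :=
  [seq mono r | r <- enum [pred r : expo d n | inB r]].

(* Modulo R'(1) the generator (x_i - x_j)(x_i - x_k)(x_j - x_k)
   with j = i+1 < k rewrites x_i x_k^2 as a combination of five monomials
   that are smaller for a well-founded weight; every monomial that is not
   yet in B_{d,n}(1) is divisible by such an x_i x_k^2 (i its first nonzero
   position), so B_{d,n}(1) and R'(1) span A_{d,n}.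

   With w a primitive d-th root of unity, evaluation at a
   point (w^(p_1), ..., w^(p_n)) is a character of A_{d,n}; it kills R'(1)
   when the p_l take at most two values.  Each monomial of B_{d,n}(1) gets
   such a two-valued point, injectively, and the primitive idempotents of
   these points form a family dual to the evaluations, hence a free family
   of size |B_{d,n}(1)| whose span meets R'(1) trivially.

   A dimension count (basis_modulo) then yields the basis statement and
   dim A/R'(1) = |B_{d,n}(1)|, and a direct count of B_{d,n}(1) by leading
   index gives d + (d-1) d (2^(n-1) - 1), the claimed dimension. *)

From HB Require Import structures.
From mathcomp Require Import all_boot all_order all_algebra all_field.
From mathcomp Require Import zify ring.
Set Implicit Arguments. Unset Strict Implicit. Unset Printing Implicit Defensive.
Import GRing.Theory Num.Theory.
Local Open Scope ring_scope.

Section LinearAlgebra.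
Variables (K : fieldType) (vT : vectType K).

Lemma basis_modulo (B : seq vT) (R X : {vspace vT}) :
    (<<B>> + R)%VS = fullv -> \dim X = size B -> (X :&: R = 0)%VS ->
  [/\ free B, directv (<<B>> + R) & (\dim {:vT} - \dim R)%N = size B].
Proof.
move=> full dimX disjXR.
have hXR : (\dim X + \dim R <= \dim {:vT})%N.
  by rewrite -dimv_disjoint_sum // dimvS // subvf.
have [hBR _] := dimv_add_leqif <<B>> R; rewrite full in hBR.
have hB := dim_span B.
by split; [rewrite /free; apply/eqP | rewrite directvEgeq /= full |]; lia.
Qed.

Variables (X : seq vT) (phi : nat -> {scalar vT}).
Hypothesis phi_dual : forall i j, (i < size X)%N -> (j < size X)%N ->
  (phi j X`_i == 0) = (i != j).

Lemma dual_form_comb (c : 'I_(size X) -> K) (j : 'I_(size X)) :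
  phi j (\sum_(i < size X) c i *: X`_i) = c j * phi j X`_j.
Proof.
rewrite linear_sum (bigD1 j) //= big1 ?addr0 => [|i hij]; first by rewrite linearZ.
by rewrite linearZ /=; apply/eqP; rewrite mulf_eq0 phi_dual // orbC (inj_eq val_inj) hij.
Qed.

Lemma dual_family_free : free X.
Proof.
suff : free (in_tuple X) by [].
apply/freeP => c hc j; have := congr1 (phi j) hc; rewrite dual_form_comb linear0 => /eqP.
by rewrite mulf_eq0 phi_dual // eqxx orbF => /eqP.
Qed.

Lemma dual_family_disjoint (R : {vspace vT}) :
  (forall j, (j < size X)%N -> {in R, forall v, phi j v = 0}) -> (<<X>> :&: R = 0)%VS.
Proof.
move=> phiR; apply/eqP; rewrite -subv0; apply/subvP => v /memv_capP [vX vR].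
rewrite memv0 (coord_span (X := in_tuple X) vX) big1 // => j _.
have := phiR j (ltn_ord j) v vR.
rewrite {1}(coord_span (X := in_tuple X) vX) dual_form_comb.
by move/eqP; rewrite mulf_eq0 phi_dual // eqxx orbF => /eqP ->; rewrite scale0r.
Qed.
End LinearAlgebra.

Section MonomialCalculus.
Variables (d' n : nat).
Local Notation d := d'.+2.
Local Notation E := (expo d n).
Local Notation AA := (A d n).

Lemma amulE (f g : AA) (m : E) :
  amul f g m = \sum_(m1 : E) \sum_(m2 : E | m1 + m2 == m) f m1 * g m2.
Proof.
rewrite ffunE; apply: eq_bigr => m1 _; apply: eq_bigl => m2.
apply/forallP/eqP => [H|<- j]; last by rewrite ffunE.
by apply/ffunP => j; apply/val_inj; rewrite ffunE /=; apply/eqP/H.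
Qed.

Lemma amulBl (f g h : AA) : amul (f - g) h = amul f h - amul g h.
Proof.
apply/ffunP => m; rewrite [in RHS]ffunE [X in _ = _ + X]ffunE !amulE -sumrB.
apply: eq_bigr => m1 _.
by rewrite -sumrB; apply: eq_bigr => m2 _; rewrite !ffunE mulrBl.
Qed.

Lemma amulBr (f g h : AA) : amul h (f - g) = amul h f - amul h g.
Proof.
apply/ffunP => m; rewrite [in RHS]ffunE [X in _ = _ + X]ffunE !amulE -sumrB.
apply: eq_bigr => m1 _.
by rewrite -sumrB; apply: eq_bigr => m2 _; rewrite !ffunE mulrBr.
Qed.

Lemma amulDr (f g h : AA) : amul h (f + g) = amul h f + amul h g.
Proof.
apply/ffunP => m; rewrite [in RHS]ffunE !amulE -big_split; apply: eq_bigr => m1 _.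
by rewrite -big_split; apply: eq_bigr => m2 _; rewrite ffunE mulrDr.
Qed.

Lemma amul_mono (r s : E) : amul (mono r) (mono s) = mono (r + s).
Proof.
apply/ffunP => m; rewrite amulE ffunE (bigD1 r) //=.
rewrite [X in _ + X]big1 => [|m1 /negbTE Hm1]; last first.
  by apply: big1 => m2 _; rewrite ffunE Hm1 mul0r.
rewrite addr0; have [<-|Hm] := eqVneq (r + s) m.
  rewrite (bigD1 s) //= big1 => [|m2 /andP [_ /negbTE Hm2]]; last first.
    by rewrite !ffunE Hm2 mulr0.
  by rewrite !ffunE !eqxx mul1r addr0.
rewrite big1 // => m2 /eqP Em; rewrite !ffunE.
by have [Es|] := eqVneq m2 s; [move: Hm; rewrite -Em Es eqxx | rewrite mulr0].
Qed.

Definition unit_expo (i : 'I_n) : E := [ffun j => (j == i)%:R].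

Lemma xvar_mono (i : 'I_n) : xvar d i = mono (unit_expo i).
Proof.
apply/ffunP => m; rewrite !ffunE; congr (nat_of_bool _)%:R.
apply/idP/eqP => [/andP [/eqP Hi /forallP Hj]|->].
  apply/ffunP => j; apply/val_inj; rewrite ffunE.
  have [-> //|ne] := eqVneq j i; by move: (Hj j); rewrite ne => /eqP.
rewrite ffunE eqxx /=; apply/forallP => j; rewrite ffunE.
by case: (j == i).
Qed.

Local Notation e := unit_expo.

(* (x_i - x_j)(x_i - x_k)(x_j - x_k) expanded into monomials: the term
   x_i x_k^2 minus five other monomials (the two terms x_i x_j x_k cancel). *)
Lemma gen3_expand (i j k : 'I_n) : gen3 d i j k =
  mono (e i + e k + e k) - (mono (e i + e i + e k) - mono (e i + e i + e j)
  + mono (e i + e j + e j) - mono (e j + e j + e k) + mono (e j + e k + e k)).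
Proof.
rewrite /gen3 !xvar_mono !amulBl !amulBr !amul_mono !amulBl !amul_mono.
rewrite [e j + e i]addrC [e i + e j + e k]addrAC [e j + e k + e j]addrAC.
by apply/ffunP => m; rewrite !ffunE; ring.
Qed.

Lemma mono_decomp (f : AA) : f = \sum_(r : E) f r *: mono r.
Proof.
apply/ffunP => m; rewrite sum_ffunE (bigD1 m) //= big1 => [|r /negbTE Hr].
  by rewrite !ffunE eqxx addr0; exact: (esym (mulr1 _)).
by rewrite !ffunE eq_sym Hr; exact: (mulr0 _).
Qed.
End MonomialCalculus.

Section Spanning.
Variables (d' n : nat).
Local Notation d := d'.+2.
Local Notation E := (expo d n).
Local Notation AA := (A d n).
Local Notation e := (@unit_expo d' n).

Lemma val_shift (x : 'I_d) (a b : nat) : (a <= x)%N -> (b <= a)%N ->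
  nat_of_ord (x - a%:R + b%:R) = (x - a + b)%N.
Proof.
move=> ha hb; rewrite -{1}(natr_Zp x) -natrB // -natrD Zp_nat /= modn_small //.
by have := ltn_ord x; lia.
Qed.

Lemma val_shift_lt (x : 'I_d) (a b : nat) : (a <= x)%N -> (b < a)%N ->
  (nat_of_ord (x - a%:R + b%:R)%R < x)%N.
Proof. by move=> ha hb; rewrite val_shift //; [lia | apply: ltnW]. Qed.

Definition zeros_below (i : nat) (r : E) := forall l : 'I_n, (l < i)%N -> r l = 0%N :> nat.

(* Termination measure for the rewriting x_i x_k^2 -> lower terms (k > i+1):
   the sum of the exponents beyond position i+1, then the exponent of x_i. *)
Definition weight (i : 'I_n) (r : E) : nat :=
  ((\sum_(l : 'I_n | (i.+1 < l)%N) r l) * d + r i)%N.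

Lemma weight_lt (i k : 'I_n) (r s : E) : (i.+1 < k)%N ->
    (forall l : 'I_n, (i.+1 < l)%N -> l != k -> s l = r l) ->
    (s k < r k)%N \/ (s k = r k /\ (s i < r i)%N) ->
  (weight i s < weight i r)%N.
Proof.
move=> hk Hs Hc; rewrite /weight (bigD1 k) //= [X in (_ < X * _ + _)%N](bigD1 k) //=.
rewrite (eq_bigr (fun l => nat_of_ord (r l))) => [|l /andP [hl hlk]]; last by rewrite Hs.
set T := bigop _ _ _; have := ltn_ord (s i).
case: Hc => [hlt|[-> hlt]]; last by lia.
have : ((s k + T).+1 * d <= (r k + T) * d)%N by rewrite leq_mul2r; lia.
by rewrite mulSn; lia.
Qed.

Definition shift_expo (r : E) (i k p q u : 'I_n) : E :=
  r - (e i + e k + e k) + (e p + e q + e u).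

Lemma shift_expoE (r : E) (i k p q u l : 'I_n) : shift_expo r i k p q u l =
  r l - ((l == i) + (l == k) + (l == k))%N%:R + ((l == p) + (l == q) + (l == u))%N%:R.
Proof. by rewrite !ffunE !natrD. Qed.

Lemma shift_expo_outside (S : seq 'I_n) (r : E) (i k p q u l : 'I_n) :
    i \in S -> k \in S -> p \in S -> q \in S -> u \in S -> l \notin S ->
  shift_expo r i k p q u l = r l.
Proof.
move=> hi hk hp hq hu hl; have notin x : x \in S -> (l == x) = false.
  by move=> hx; apply: contraNF hl => /eqP ->.
by rewrite shift_expoE !notin //= subr0 addr0.
Qed.

Lemma shifted_relation (r : E) (i j k : 'I_n) :
  amul (mono (r - (e i + e k + e k))) (gen3 d i j k) = mono r -
    (mono (shift_expo r i k i i k) - mono (shift_expo r i k i i j)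
     + mono (shift_expo r i k i j j) - mono (shift_expo r i k j j k)
     + mono (shift_expo r i k j k k)).
Proof. by rewrite gen3_expand !(amulBr, amulDr) !amul_mono subrK. Qed.

Variable W : {vspace AA}.
Hypothesis W_B : forall r : E, inB r -> mono r \in W.
Hypothesis W_R : forall (r : E) (i j k : 'I_n), (i < j < k)%N ->
  amul (mono r) (gen3 d i j k) \in W.

Lemma reduce_monomial (i j k : 'I_n) (r : E) :
    j = i.+1 :> nat -> (j < k)%N -> (0 < r i)%N -> (1 < r k)%N ->
    (forall s : E, (forall l, l \notin [:: i; j; k] -> s l = r l) ->
       (weight i s < weight i r)%N -> mono s \in W) ->
  mono r \in W.
Proof.
move=> hj hjk hri hrk IH; set S := [:: i; j; k].
have [iS jS kS] : [/\ i \in S, j \in S & k \in S] by rewrite !inE !eqxx ?orbT.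
have [ki kj ij ik] :
    [/\ (k == i) = false, (k == j) = false, (i == j) = false & (i == k) = false].
  by rewrite -!(inj_eq val_inj) /=; split; apply/negbTE; lia.
have smaller (p q u : 'I_n) : p \in S -> q \in S -> u \in S ->
    let s := shift_expo r i k p q u in
    (nat_of_ord (s k) < r k)%N \/ (s k = r k /\ (nat_of_ord (s i) < r i)%N) ->
    mono s \in W.
  move=> pS qS uS s hs; apply: IH => [l|]; first exact: shift_expo_outside.
  apply: (weight_lt (k := k)) => //; first lia.
  move=> l hl hlk; apply: (shift_expo_outside (S := S)) => //.
  by move: hlk; rewrite !inE -!(inj_eq val_inj) /=; lia.
have hG := W_R (r - (e i + e k + e k)) (ltac:(apply/andP; split; lia) : (i < j < k)%N).
rewrite shifted_relation in hG; rewrite -[mono r](subrK (mono (shift_expo r i k i i k)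
  - mono (shift_expo r i k i i j) + mono (shift_expo r i k i j j)
  - mono (shift_expo r i k j j k) + mono (shift_expo r i k j k k))).
apply: rpredD => //; apply: rpredD; first apply: rpredB; first apply: rpredD;
  first apply: rpredB.
- by apply: smaller => //; left; rewrite shift_expoE ?ki ?kj eqxx; apply: val_shift_lt.
- by apply: smaller => //; left; rewrite shift_expoE ?ki ?kj eqxx; apply: val_shift_lt.
- by apply: smaller => //; left; rewrite shift_expoE ?ki ?kj eqxx; apply: val_shift_lt.
- by apply: smaller => //; left; rewrite shift_expoE ?ki ?kj eqxx; apply: val_shift_lt.
apply: smaller => //; right; rewrite !shift_expoE ?ki ?kj ?ij ?ik !eqxx subrK.
by split; last apply: val_shift_lt.
Qed.

(* Monomials vanishing below position i reduce to those vanishing below i+1: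
   by induction on the weight, either r_i = 0, or r is in B_{d,n}(1) with
   leading index i, or some x_i x_k^2 (k > i+1) divides x^r and
   reduce_monomial applies. *)
Lemma span_step (i : 'I_n) : (i.+1 < n)%N ->
    (forall r : E, zeros_below i.+1 r -> mono r \in W) ->
  forall r : E, zeros_below i r -> mono r \in W.
Proof.
move=> hi Hnext r; have [m] := ubnP (weight i r); elim: m r => // m IHm r hm hr.
have [ri0|ri_pos] := posnP (r i).
  apply: Hnext => l; rewrite ltnS leq_eqVlt => /orP [/eqP hl|/hr //].
  by have -> : l = i by apply/val_inj.
have [k /andP [hk hrk]|none] := pickP [pred k : 'I_n | (i.+1 < k)%N && (1 < r k)%N].
  apply: (@reduce_monomial i (Ordinal hi) k) => // s Hs hlt.
  apply: IHm; first exact: leq_trans hlt _.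
  by move=> l hl; rewrite Hs ?hr // !inE -!(inj_eq val_inj) /=; lia.
apply: W_B; apply/orP; left; apply/existsP; exists i; apply/and4P; split => //.
- by apply/forallP => l; apply/implyP => /hr ->.
- apply/forallP => l; apply/implyP => hl.
  by move: (none l); rewrite /= hl /= => /negbT; rewrite -leqNgt.
Qed.

Lemma span_monomials (r : E) : mono r \in W.
Proof.
suff H t : forall i, (i + t)%N = n.-1 -> forall r, zeros_below i r -> mono r \in W.
  by apply: (H n.-1 0%N) => // l.
elim: t => [|t IHt] i hit r' hr'.
  apply: W_B; apply/orP; right; apply/forallP => l; apply/implyP => hl.
  by rewrite hr' //; lia.
have hi : (i < n)%N by lia.
by apply: (span_step (i := Ordinal hi)) => //=; [lia | apply: IHt; lia].
Qed.
End Spanning.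

Section Characters.
Variables (d' n : nat).
Local Notation d := d'.+2.
Local Notation E := (expo d n).
Local Notation AA := (A d n).
Variable w : algC.
Hypothesis w_prim : d.-primitive_root w.

Definition chi (m p : E) : algC := \prod_(j : 'I_n) (w ^+ p j) ^+ m j.

Definition ev (p : E) (f : AA) : algC := \sum_(m : E) f m * chi m p.

Lemma root_pow_order (a : nat) : (w ^+ a) ^+ d = 1.
Proof. by rewrite -exprM mulnC exprM (prim_expr_order w_prim) expr1n. Qed.

Lemma chiDl (r s p : E) : chi (r + s) p = chi r p * chi s p.
Proof.
rewrite /chi -big_split /=; apply: eq_bigr => j _.
by rewrite ffunE /= expr_mod ?root_pow_order // exprD.
Qed.

Lemma chiDr (m p q : E) : chi m (p + q) = chi m p * chi m q.
Proof.
rewrite /chi -big_split /=; apply: eq_bigr => j _.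
by rewrite ffunE /= prim_expr_mod // -exprMn -exprD.
Qed.

Lemma ev_is_linear (p : E) : scalar (ev p).
Proof.
move=> a f g; rewrite /ev mulr_sumr -big_split /=; apply: eq_bigr => m _.
by rewrite !ffunE mulrDl mulrA.
Qed.

HB.instance Definition _ (p : E) := GRing.isLinear.Build algC AA algC *%R (ev p)
  (ev_is_linear p).

Lemma ev_mono (p s : E) : ev p (mono s) = chi s p.
Proof.
rewrite /ev (bigD1 s) //= big1 => [|m /negbTE h]; last by rewrite ffunE h mul0r.
by rewrite ffunE eqxx mul1r addr0.
Qed.

Lemma ev_amul (p : E) (f g : AA) : ev p (amul f g) = ev p f * ev p g.
Proof.
rewrite /ev.
transitivity (\sum_(m1 : E) \sum_(m2 : E) f m1 * g m2 * chi (m1 + m2) p).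
  rewrite [RHS](eq_bigr (fun m1 => \sum_(m : E) \sum_(m2 : E)
      (if m1 + m2 == m then f m1 * g m2 * chi m p else 0))); last first.
    move=> m1 _; rewrite exchange_big /=; apply: eq_bigr => m2 _.
    rewrite (bigD1 (m1 + m2)) //= eqxx big1 ?addr0 // => m /negbTE h.
    by rewrite eq_sym h.
  rewrite exchange_big /=; apply: eq_bigr => m _.
  rewrite amulE big_distrl /=; apply: eq_bigr => m1 _.
  rewrite big_distrl /= big_mkcond /=; apply: eq_bigr => m2 _.
  by case: ifP => _; rewrite ?mul0r.
rewrite big_distrl /=; apply: eq_bigr => m1 _; rewrite big_distrr /=.
by apply: eq_bigr => m2 _; rewrite chiDl; ring.
Qed.

Lemma ev_xvar (p : E) (i : 'I_n) : ev p (xvar d i) = w ^+ p i.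
Proof.
rewrite xvar_mono ev_mono /chi (bigD1 i) //= big1 => [|j hj]; last first.
  by rewrite ffunE (negbTE hj) expr0.
by rewrite ffunE eqxx mulr1.
Qed.

Lemma vandermonde3_two_values (a b x y z : algC) :
  x \in [:: a; b] -> y \in [:: a; b] -> z \in [:: a; b] ->
  (x - y) * (x - z) * (y - z) = 0.
Proof.
by rewrite !inE => /orP [] /eqP -> /orP [] /eqP -> /orP [] /eqP ->;
  rewrite !subrr ?(mul0r, mulr0).
Qed.

Lemma ev_Rp1 (p : E) (u v : 'I_d) : (forall l, p l \in [:: u; v]) ->
  forall f, f \in Rp1 d n -> ev p f = 0.
Proof.
move=> hp f; rewrite /Rp1; set S := [seq _ | r <- _, t <- _] => hf.
rewrite (coord_span (X := in_tuple S) hf) linear_sum big1 // => i _.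
have /allpairsP [[r [[i1 i2] i3]] [_ _ ->]] : S`_i \in S by apply: mem_nth.
have two l : w ^+ p l \in [:: w ^+ u; w ^+ v].
  by move: (hp l); rewrite !inE => /orP [] /eqP ->; rewrite eqxx ?orbT.
rewrite linearZ /= ev_amul /gen3 !ev_amul !linearB /= !ev_xvar.
by rewrite (vandermonde3_two_values (two i1) (two i2) (two i3)) !mulr0.
Qed.

Lemma sum_root_powers (c : 'I_d) : \sum_(a : 'I_d) (w ^+ c) ^+ a = (c == 0)%:R * d%:R.
Proof.
have [->|hc] := eqVneq c 0.
  rewrite expr0 (eq_bigr (fun _ => 1)) => [|a _]; last by rewrite expr1n.
  by rewrite sumr_const card_ord mul1r.
rewrite mul0r; have hz : w ^+ c - 1 != 0.
  rewrite subr_eq0 -(prim_order_dvd w_prim); apply/negP => /dvdnP [q hq].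
  have := ltn_ord c; rewrite hq; case: q hq => [|q] hq.
    by move: hc; rewrite -(inj_eq val_inj) /= hq eqxx.
  by rewrite mulSn; lia.
have := subrX1 (w ^+ c) d; rewrite root_pow_order subrr => /esym /eqP.
by rewrite mulf_eq0 (negbTE hz) /= => /eqP H; rewrite -[RHS]H; apply: eq_bigr.
Qed.

Lemma sum_chi (c : E) : \sum_(m : E) chi m c = (c == 0)%:R * d%:R ^+ n.
Proof.
rewrite /chi -(bigA_distr_bigA (fun j (a : 'I_d) => (w ^+ c j) ^+ a)) /=.
under eq_bigr => j _ do rewrite sum_root_powers.
have [->|hc] := eqVneq c 0.
  rewrite mul1r (eq_bigr (fun _ => d%:R)) => [|j _]; last by rewrite ffunE eqxx mul1r.
  by rewrite prodr_const card_ord.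
rewrite mul0r; have [j hj] : exists j, c j != 0.
  apply/existsP; apply: contraR hc => /existsPn H; apply/eqP/ffunP => j.
  by have := H j; rewrite negbK ffunE => /eqP.
by rewrite (bigD1 j) //= (negbTE hj) !mul0r.
Qed.

(* d^n times the primitive idempotent of the character q *)
Definition idem (q : E) : AA := \sum_(m : E) chi m (- q) *: mono m.

Lemma ev_idem (p q : E) : ev p (idem q) = (p == q)%:R * d%:R ^+ n.
Proof.
rewrite linear_sum /=.
under eq_bigr => m _ do rewrite linearZ /= ev_mono -chiDr.
by rewrite sum_chi addrC subr_eq0.
Qed.
End Characters.

Section PointsOfB.
Variables (d' n' : nat).
Local Notation d := d'.+2.
Local Notation n := n'.+1.
Local Notation E := (expo d n).

Definition lead_at (r : E) (i : 'I_n) : bool :=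
  [&& (i.+1 < n)%N, (0 < r i)%N,
      [forall j : 'I_n, (j < i)%N ==> (r j == 0%N :> nat)] &
      [forall j : 'I_n, (i.+1 < j)%N ==> (r j <= 1)%N]].

Definition pure_last (r : E) : bool :=
  [forall j : 'I_n, (j.+1 < n)%N ==> (r j == 0%N :> nat)].

Lemma inBE (r : E) : inB r = [exists i, lead_at r i] || pure_last r.
Proof. by []. Qed.

(* the leading index is the first nonzero position, hence unique *)
Lemma lead_at_uniq (r : E) (i i' : 'I_n) : lead_at r i -> lead_at r i' -> i = i'.
Proof.
move=> /and4P [_ hi /forallP low _] /and4P [_ hi' /forallP low' _].
apply/val_inj; case: (ltngtP i i') => // hlt.
  by move: (low' i); rewrite hlt /= => /eqP e; rewrite e in hi.
by move: (low i'); rewrite hlt /= => /eqP e; rewrite e in hi'.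
Qed.

Lemma lead_at_pure_last (r : E) (i : 'I_n) : lead_at r i -> ~~ pure_last r.
Proof.
move=> /and4P [hin hi _ _]; apply/forallP => /(_ i); rewrite hin /= => /eqP e.
by rewrite e in hi.
Qed.

Lemma lead_at_neq0 (r : E) (i : 'I_n) : lead_at r i -> r i != 0.
Proof. by case/and4P => _ hi _ _; apply/negP => /eqP e; rewrite e in hi. Qed.

(* The point (a two-valued exponent vector) attached to a monomial of B:
   for x_i^a x_{i+1}^b prod x_j^(eps_j) it is (b,...,b, a+b, b + a eps_j ...),
   for x_n^b it is the constant vector b.  Distinct monomials of B get
   distinct points, and R'(1) vanishes at each of them. *)
Definition point (r : E) : E :=
  if [pick i | lead_at r i] is Some i then
    [ffun l : 'I_n => r (inord i.+1) + r i *
       (if (l <= i)%N then 0 else if l == inord i.+1 then 1 else r l)]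
  else [ffun _ => r ord_max].

Lemma inord_succ (i : 'I_n) : (i.+1 < n)%N -> nat_of_ord (inord i.+1 : 'I_n) = i.+1.
Proof. by move=> h; rewrite inordK. Qed.

Lemma point_lead (r : E) (i : 'I_n) : lead_at r i -> point r =
  [ffun l : 'I_n => r (inord i.+1) + r i *
     (if (l <= i)%N then 0 else if l == inord i.+1 then 1 else r l)].
Proof.
rewrite /point => hi; case: pickP => [i' hi'|]; last by move/(_ i); rewrite hi.
by rewrite (lead_at_uniq hi' hi).
Qed.

Lemma point_last (r : E) : pure_last r -> point r = [ffun _ => r ord_max].
Proof.
rewrite /point => ht; case: pickP => [i' hi'|//].
by move: (lead_at_pure_last hi'); rewrite ht.
Qed.

Lemma point_lead_low (r : E) (i l : 'I_n) : lead_at r i -> (l <= i)%N ->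
  point r l = r (inord i.+1).
Proof. by move=> hi hl; rewrite (point_lead hi) ffunE hl mulr0 addr0. Qed.

Lemma point_lead_next (r : E) (i : 'I_n) : lead_at r i ->
  point r (inord i.+1) = r (inord i.+1) + r i.
Proof.
move=> hi; have hin : (i.+1 < n)%N by case/and4P: hi.
by rewrite (point_lead hi) ffunE inord_succ // ltnn eqxx mulr1.
Qed.

Lemma point_lead_high (r : E) (i l : 'I_n) : lead_at r i -> (i.+1 < l)%N ->
  point r l = r (inord i.+1) + r i * r l.
Proof.
move=> hi hl; have hin : (i.+1 < n)%N by case/and4P: hi.
rewrite (point_lead hi) ffunE ifF; last by apply/negbTE; rewrite -ltnNge; lia.
by rewrite ifF //; apply/negbTE; rewrite -(inj_eq val_inj) /= inord_succ //; lia.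
Qed.

Lemma ord_le1 (x : 'I_d) : (x <= 1)%N -> x = 0 \/ x = 1.
Proof. by case: x => [[|[|m]] hm] h //=; [left|right]; apply/val_inj. Qed.

Lemma point_two_valued (r : E) : inB r ->
  exists u v : 'I_d, forall l, point r l \in [:: u; v].
Proof.
rewrite inBE => /orP [/existsP [i hi]|ht]; last first.
  by exists (r ord_max), 0 => l; rewrite point_last // ffunE mem_head.
rewrite (point_lead hi); exists (r (inord i.+1)), (r (inord i.+1) + r i) => l.
rewrite ffunE !inE; case: ifP => hl1; first by rewrite mulr0 addr0 eqxx.
case: ifP => hl2; first by rewrite mulr1 eqxx orbT.
move: hi => /and4P [hin _ _ /forallP high].
have hl : (i.+1 < l)%N.
  move: hl2 => /negbT; rewrite -(inj_eq val_inj) /= inord_succ // => hne.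
  by move: hl1 => /negbT; rewrite -ltnNge; lia.
move: (high l); rewrite hl /= => /ord_le1 [->|->].
  by rewrite mulr0 addr0 eqxx.
by rewrite mulr1 eqxx orbT.
Qed.

(* the leading index can be read off the point: it is one less than the first
   coordinate differing from the 0th one *)
Lemma point_lead_le (r s : E) (i : 'I_n) : lead_at r i -> point r = point s ->
  inB s -> exists2 i', lead_at s i' & (i <= i')%N.
Proof.
move=> hi e; rewrite inBE => /orP [/existsP [i' hi']|ht].
  exists i' => //; rewrite leqNgt; apply/negP => hlt.
  have hin' : (i'.+1 < n)%N by case/and4P: hi'.
  have e1 := point_lead_low hi (l := ord0) (leq0n _).
  have e2 := point_lead_low hi (l := inord i'.+1) (ltac:(rewrite inord_succ //)).
  rewrite e (point_lead_low hi' (l := ord0) (leq0n _)) in e1.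
  rewrite e (point_lead_next hi') -e1 in e2.
  have h0 : s i' = 0 by apply: (addrI (s (inord i'.+1))); rewrite addr0.
  by move: (lead_at_neq0 hi'); rewrite h0 eqxx.
have e1 := point_lead_next hi; have e2 := point_lead_low hi (l := ord0) (leq0n _).
rewrite e (point_last ht) ffunE in e1; rewrite e (point_last ht) ffunE e1 in e2.
have h0 : r i = 0 by apply: (addrI (r (inord i.+1))); rewrite addr0.
by move: (lead_at_neq0 hi); rewrite h0 eqxx.
Qed.

(* with the same leading index, the point determines a = r_i, b = r_(i+1)
   and, since a != 0, the eps_j *)
Lemma point_lead_inj (r s : E) (i : 'I_n) : lead_at r i -> lead_at s i ->
  point r = point s -> r = s.
Proof.
move=> hi hi' e; have hin : (i.+1 < n)%N by case/and4P: hi.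
have eb : r (inord i.+1) = s (inord i.+1).
  by rewrite -(point_lead_low hi (l := ord0)) // -(point_lead_low hi' (l := ord0)) // e.
have ea : r i = s i.
  by apply: (addrI (r (inord i.+1))); rewrite -point_lead_next // e point_lead_next // eb.
have na := lead_at_neq0 hi.
move: (hi) (hi') => /and4P [_ _ /forallP low /forallP high].
move=> /and4P [_ _ /forallP low' /forallP high'].
apply/ffunP => l; case: (ltngtP l i) => [hl|hl|hl].
- move: (low l) (low' l); rewrite hl /= => /eqP e1 /eqP e2.
  by apply/val_inj; rewrite /= e1 e2.
- have [hl1|hl1] := eqVneq (nat_of_ord l) i.+1.
    by have -> : l = inord i.+1 by apply/val_inj; rewrite /= inord_succ.
  have hl2 : (i.+1 < l)%N by lia.
  have := point_lead_high hi hl2; rewrite e (point_lead_high hi' hl2) -eb ea => /addrI.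
  move: (high l) (high' l); rewrite hl2 /= => /ord_le1 [] -> /ord_le1 [] -> //;
    by rewrite mulr0 mulr1 -ea => /eqP; rewrite ?[0 == _]eq_sym (negbTE na).
- by have -> : l = i by apply/val_inj.
Qed.

Lemma point_last_inj (r s : E) : pure_last r -> pure_last s -> point r = point s -> r = s.
Proof.
move=> hr hs e; have em : r ord_max = s ord_max.
  move: (congr1 (fun f : E => f ord_max) e).
  by rewrite (point_last hr) (point_last hs) !ffunE.
apply/ffunP => l; case: (ltnP l.+1 n) => hl.
  move: hr hs => /forallP /(_ l) hr /forallP /(_ l) hs.
  by move: hr hs; rewrite hl /= => /eqP e1 /eqP e2; apply/val_inj; rewrite /= e1 e2.
by have -> : l = ord_max by apply/val_inj => /=; have := ltn_ord l; lia.
Qed.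

Lemma point_inj : {in [pred r | inB r] &, injective point}.
Proof.
move=> r s; rewrite !inE => hr hs e.
move: (hr); rewrite inBE => /orP [/existsP [i hi]|ht].
  have [i' hi' le_ii'] := point_lead_le hi e hs.
  have [i'' hi'' le_i'i''] := point_lead_le hi' (esym e) hr.
  have ei' : i' = i.
    by apply/val_inj/eqP; rewrite eqn_leq le_ii' andbT (lead_at_uniq hi'' hi) in le_i'i'' *.
  by rewrite ei' in hi'; apply: (point_lead_inj hi hi').
move: (hs); rewrite inBE => /orP [/existsP [i hi]|ht'].
  have [i' hi' _] := point_lead_le hi (esym e) hr.
  by move: (lead_at_pure_last hi'); rewrite ht.
exact: point_last_inj.
Qed.
End PointsOfB.

Lemma card_ord_lt (d k : nat) : (k <= d)%N -> #|[pred x : 'I_d | (x < k)%N]| = k.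
Proof.
move=> hk; have inj : injective (widen_ord hk).
  by move=> a b e; apply/val_inj; apply: (congr1 val e).
rewrite -[RHS](card_ord k) -(card_imset _ inj).
apply: eq_card => x; rewrite inE /=; apply/idP/imsetP => [hx|[y _ ->]] /=.
  by exists (Ordinal hx) => //; apply/val_inj.
exact: ltn_ord.
Qed.

Lemma card_ord_pos (d : nat) : #|[pred x : 'I_d | (0 < x)%N]| = d.-1.
Proof.
case: d => [|d]; first by apply: eq_card0 => [[]].
have -> : #|[pred x : 'I_d.+1 | (0 < x)%N]| = #|[predC [pred x : 'I_d.+1 | (x < 1)%N]]|.
  by apply: eq_card => x; rewrite !inE /=; case: (nat_of_ord x).
have := cardC [pred x : 'I_d.+1 | (x < 1)%N].
by rewrite card_ord_lt // card_ord add1n => [[]].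
Qed.

Lemma card_sum (T : finType) (P : pred T) : #|P| = (\sum_(x : T) (P x : nat))%N.
Proof.
rewrite -sum1_card big_mkcond /=; apply: eq_bigr => x _.
by rewrite unfold_in; case: (P x).
Qed.

Lemma sum_pow2 (m : nat) : (\sum_(i < m) 2 ^ (m - i.+1) = 2 ^ m - 1)%N.
Proof.
elim: m => [|m IH]; first by rewrite big_ord0.
rewrite big_ord_recl /= subSS subn0.
under eq_bigr => i _ do rewrite /bump /= add1n subSS.
by rewrite IH; have := expn_gt0 2 m; rewrite expnS; lia.
Qed.

Section CountB.
Variables (d' n' : nat).
Local Notation d := d'.+2.
Local Notation n := n'.+1.
Local Notation E := (expo d n).

Definition lead_slot (i l : 'I_n) : pred 'I_d := [pred x : 'I_d |
  if (l < i)%N then (x < 1)%N else if l == i then (0 < x)%N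
  else if (l == i.+1 :> nat) then true else (x < 2)%N].

Definition lead_slot_size (i l : nat) : nat :=
  (if l < i then 1 else if l == i then d.-1 else if l == i.+1 then d else 2)%N.

Lemma card_lead_slot (i l : 'I_n) : #|lead_slot i l| = lead_slot_size i l.
Proof.
rewrite /lead_slot_size; case: ifP => h1.
  by rewrite -(card_ord_lt (d := d) (k := 1)) //; apply: eq_card => x; rewrite !inE h1.
case: ifP => h2.
  rewrite -(card_ord_pos d); apply: eq_card => x; rewrite !inE h1.
  by rewrite -(inj_eq val_inj) /= h2.
have h2' : (l == i) = false by apply/negbTE; rewrite -(inj_eq val_inj) /= h2.
case: ifP => h3.
  by rewrite -[in RHS](card_ord d); apply: eq_card => x; rewrite !inE h1 h2' h3.
by rewrite -(card_ord_lt (d := d) (k := 2)) //; apply: eq_card => x; rewrite !inE h1 h2' h3.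
Qed.

Lemma card_lead_at (i : 'I_n) : (i.+1 < n)%N ->
  #|[pred r : E | lead_at r i]| = (\prod_(l : 'I_n) lead_slot_size i l)%N.
Proof.
move=> hi; have := card_family (lead_slot i); rewrite foldrE big_map big_enum /= => e.
rewrite -(eq_bigr _ (fun l _ => card_lead_slot i l)) -e.
apply: eq_card => r; rewrite inE; apply/idP/familyP => [|H].
  case/and4P => _ h2 /forallP low /forallP high l; rewrite inE.
  case: ifP => hl1; first by have := low l; rewrite hl1 /= => /eqP ->.
  case: ifP => hl2; first by rewrite (eqP hl2).
  case: ifP => hl3 //.
  have hl : (i.+1 < l)%N.
    move: hl1 hl2 hl3 => /negbT; rewrite -leqNgt => hl1 /negbT hl2 /negbT hl3.
    by rewrite -(inj_eq val_inj) /= in hl2; lia.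
  by have := high l; rewrite hl /=.
apply/and4P; split => //.
- by have := H i; rewrite inE ltnn eqxx.
- apply/forallP => l; apply/implyP => hl; have := H l; rewrite inE hl.
  by case: (nat_of_ord (r l)).
- apply/forallP => l; apply/implyP => hl; have := H l; rewrite inE.
  rewrite ifF; last by apply/negbTE; rewrite -leqNgt; lia.
  rewrite ifF; last by apply/negbTE; rewrite -(inj_eq val_inj) /=; lia.
  by rewrite ifF //; apply/negbTE; lia.
Qed.

Lemma prod_lead_slot_size (i : nat) : (i.+1 < n)%N ->
  (\prod_(l < n) lead_slot_size i l = d.-1 * d * 2 ^ (n - i.+2))%N.
Proof.
move=> hi; rewrite -(big_mkord xpredT (lead_slot_size i)).
rewrite (@big_cat_nat _ _ _ i) /=; [|lia|lia].
rewrite big_nat_cond big1 => [|l /andP [/andP [_ h] _]]; last by rewrite /lead_slot_size h.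
rewrite mul1n big_ltn; last lia.
rewrite big_ltn; last lia.
rewrite (eq_big_nat _ _ (F2 := fun _ => 2%N)) => [|l /andP [h1 h2]]; last first.
  by rewrite /lead_slot_size !ifF //; lia.
rewrite prod_nat_const_nat /lead_slot_size ltnn eqxx ifF; last lia.
by rewrite ifF ?eqxx ?mulnA //; lia.
Qed.

Lemma card_pure_last : #|[pred r : E | pure_last r]| = d.
Proof.
pose slot (l : 'I_n) : pred 'I_d :=
  [pred x : 'I_d | if (l.+1 < n)%N then (x < 1)%N else true].
have := card_family slot; rewrite foldrE big_map big_enum /= => e.
have -> : #|[pred r : E | pure_last r]| = #|family slot|.
  apply: eq_card => r; rewrite inE; apply/idP/familyP => [/forallP H l|H].
    by rewrite inE; case: ifP => // hl; have := H l; rewrite hl /= => /eqP ->.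
  apply/forallP => l; apply/implyP => hl; have := H l; rewrite inE hl.
  by case: (nat_of_ord (r l)).
rewrite e big_ord_recr /= big1 => [|l _]; last first.
  rewrite -(card_ord_lt (d := d) (k := 1)) //; apply: eq_card => x.
  by rewrite !inE /= ltnS ltn_ord.
by rewrite mul1n -[RHS](card_ord d); apply: eq_card => x; rewrite !inE ltnn.
Qed.

Lemma card_B : #|[pred r : E | inB r]| = (d + d.-1 * d * (2 ^ n' - 1))%N.
Proof.
rewrite card_sum.
transitivity (\sum_(r : E) (pure_last r : nat)
              + \sum_(r : E) \sum_(i : 'I_n) (lead_at r i : nat))%N.
  rewrite -big_split; apply: eq_bigr => r _ /=; rewrite inBE.
  case: (boolP [exists i, lead_at r i]) => [/existsP [i hi]|/existsPn hn] /=.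
    rewrite (bigD1 i) //= hi big1 => [|i' hi'].
      by rewrite (negbTE (lead_at_pure_last hi)).
    case: (boolP (lead_at r i')) => // hi''.
    by move: hi'; rewrite (lead_at_uniq hi'' hi) eqxx.
  by rewrite big1 ?addn0 // => i _; rewrite (negbTE (hn i)).
rewrite -card_sum card_pure_last exchange_big /=; congr (_ + _)%N.
rewrite (eq_bigr (fun i : 'I_n =>
    if (i.+1 < n)%N then (d.-1 * d * 2 ^ (n - i.+2))%N else 0%N))
  => [|i _]; last first.
  rewrite -card_sum; case: ifP => hi; first by rewrite card_lead_at // prod_lead_slot_size.
  by apply: eq_card0 => r; rewrite inE /lead_at hi.
rewrite big_ord_recr /= ltnn addn0.
under eq_bigr => i _ do rewrite ltnS ltn_ord subSS.
by rewrite -big_distrr /= sum_pow2.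
Qed.
End CountB.

Lemma Bfam_Rp1_full (d' n : nat) : (<<Bfam d'.+2 n>> + Rp1 d'.+2 n)%VS = fullv.
Proof.
set W := (<<Bfam _ _>> + Rp1 _ _)%VS.
have W_B r : inB r -> mono r \in W.
  move=> hr; apply: (subvP (addvSl _ _)); apply: memv_span; apply: map_f.
  by rewrite mem_enum.
have W_R r (i j k : 'I_n) : (i < j < k)%N -> amul (mono r) (gen3 _ i j k) \in W.
  move=> hijk; apply: (subvP (addvSr _ _)); apply: memv_span.
  by apply/allpairsP; exists (r, ((i, j), k)); split => //; rewrite mem_enum.
apply/eqP; rewrite eqEsubv subvf /=; apply/subvP => f _; rewrite (mono_decomp f).
by apply: memv_suml => r _; apply/memvZ/span_monomials.
Qed.

Section IdempotentsOfB.
Variables (d' n' : nat).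
Local Notation d := d'.+2.
Local Notation n := n'.+1.
Local Notation E := (expo d n).
Local Notation AA := (A d n).
Variable w : algC.
Hypothesis w_prim : d.-primitive_root w.

Definition Bseq : seq E := enum [pred r : E | inB r].

Definition idems : seq AA := [seq idem w (point r) | r <- Bseq].
Definition ev_point (j : nat) : {scalar AA} := ev w (point Bseq`_j).

Lemma ev_point_idems (i j : nat) : (i < size idems)%N -> (j < size idems)%N ->
  (ev_point j idems`_i == 0) = (i != j).
Proof.
rewrite size_map => hi hj; rewrite /ev_point /= (nth_map 0) // ev_idem //.
have dn0 : d%:R ^+ n != 0 :> algC by rewrite expf_eq0 pnatr_eq0 andbF.
rewrite mulf_eq0 (negbTE dn0) orbF pnatr_eq0 eqb0.
have inBs k : (k < size Bseq)%N -> Bseq`_k \in [pred r | inB r].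
  by move=> hk; have := mem_nth 0 hk; rewrite mem_enum.
suff -> : (point Bseq`_j == point Bseq`_i) = (i == j) by [].
apply/eqP/eqP => [e|-> //]; apply/eqP.
by rewrite -(nth_uniq 0 hi hj (enum_uniq _)); apply/eqP/esym/point_inj; rewrite ?inBs.
Qed.

Lemma dim_idems : \dim <<idems>> = size (Bfam d n).
Proof.
have := dual_family_free ev_point_idems; rewrite /free => /eqP ->.
by rewrite !size_map.
Qed.

Lemma idems_Rp1 : (<<idems>> :&: Rp1 d n = 0)%VS.
Proof.
apply: (dual_family_disjoint ev_point_idems) => j; rewrite size_map => hj.
have := mem_nth 0 hj; rewrite mem_enum => /point_two_valued [u [v uv]].
exact: (ev_Rp1 w_prim uv).
Qed.
End IdempotentsOfB.

Lemma dim_formula (d' n' : nat) :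
  ((d'.+2 + d'.+1 * d'.+2 * (2 ^ n' - 1))%N)%:Z
    = ((2 ^ n'.+1.-1)%N%:Z - 1) * (d'.+2 ^ 2)%N%:Z - ((2 ^ n'.+1.-1)%N%:Z - 2) * d'.+2%:Z.
Proof.
have := expn_gt0 2 n'; set X := (2 ^ n')%N => hX.
rewrite /= expnS expn1 PoszD !PoszM -(subzn hX) -[d'.+2]addn2 -[d'.+1]addn1 !PoszD.
ring.
Qed.

Theorem mainTheorem17 (d n : nat) (hd : (2 <= d)%N) (hn : (1 <= n)%N) :
  (* dim_C (A_{d,n} / R'(1)) = dim A_{d,n} - dim R'(1) *)
  ((\dim (fullv : {vspace A d n}) - \dim (Rp1 d n))%N)%:Z
    = ((2 ^ n.-1)%N%:Z - 1) * (d ^ 2)%N%:Z - ((2 ^ n.-1)%N%:Z - 2) * d%:Z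
  /\
  (* the images of B_{d,n}(1) form a basis of A_{d,n}/R'(1): they are
     linearly independent modulo R'(1) and span modulo R'(1) *)
  [/\ free (Bfam d n),
      directv (<<Bfam d n>> + Rp1 d n)%VS
    & (<<Bfam d n>> + Rp1 d n)%VS = fullv].
Proof.
case: d hd => [|[|d']] // _; case: n hn => [|n'] // _.
have [w w_prim] := C_prim_root_exists (ltn0Sn d'.+1).
have full := Bfam_Rp1_full d' n'.+1.
have [freeB directBR codimR] :=
  basis_modulo full (dim_idems n' w_prim) (idems_Rp1 n' w_prim).
split=> //; rewrite codimR size_map -cardE card_B.
exact: dim_formula.
Qed.
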